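(* Let $I$ be a nonzero proper monomial ideal of $R=K[x_1,\ldots,x_d]$ ($K$ a field), and write $NP(I)=\{\mathbf{x}\in\mathbb{R}^d_+\mid \mathbf{a}_i\cdot\mathbf{x}\ge c_i,\ 1\le i\le s\}$ with $\mathbf{a}_i=(a_{i1},\ldots,a_{id})\in\mathbb{N}^d$, $c_i\in\mathbb{N}$, each inequality defining a facet of $NP(I)$. Then: (1) All jumping numbers for $I$ are rational. (2) For each $r\in\mathbb{R}_+$ there exists $r'\in\mathbb{Q}$ with $\overline{I^r}=\overline{I^{r'}}$; moreover $r'$ can be taken to be a jumping number for $I$. (3) If $r$ is a jumping number for $I$, then $nr$ is a jumping number for $I$ for all $n\in\mathbb{N}$. (4) If $\mathbf{v}=(v_1,\ldots,v_d)$ is a vertex of $NP(I)$, then for all $n\in\mathbb{N}$ the number $r_n=\frac{n}{\gcd(v_1,\ldots,v_d)}$ is a jumping number for $I$. (5) For each $i$ with $c_i\neq0$ let $S_i=\{rc_i \mid r\in\mathbb{R}_+ \text{ and there exists } \mathbf{x}\in\mathbb{N}^d \text{ with } \mathbf{a}_i\cdot\mathbf{x}=rc_i \text{ and } \mathbf{a}_l\cdot\mathbf{x}\ge rc_l \text{ for all } l\neq i\}$. Then each $S_i$ is a submonoid of the additive monoid generated by $a_{i1},\ldots,a_{id}$, and the set $\mathcal{J}$ of jumping numbers for $I$ equals $\bigcup_{c_i\neq0}\frac{1}{c_i}S_i$.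
   Context: $\mathbb{R}_+$ denotes the non-negative reals, $\mathbb{N}$ the non-negative integers, and $\mathbf{x}^{\mathbf{a}}=x_1^{a_1}\cdots x_d^{a_d}$. $NP(I)$ is the convex hull in $\mathbb{R}^d$ of $\{\mathbf{a}\in\mathbb{N}^d\mid \mathbf{x}^{\mathbf{a}}\in I\}$. For real $t\ge0$, the $t$-th real power of $I$ is $\overline{I^t}=(\{\mathbf{x}^{\mathbf{a}}\mid \mathbf{a}\in t\cdot NP(I)\cap\mathbb{N}^d\})$, where $t\cdot NP(I)=\{\mathbf{x}\in\mathbb{R}^d_+\mid \mathbf{a}_i\cdot\mathbf{x}\ge tc_i,\ 1\le i\le s\}$. For $r\ge0$, $\overline{I^{>r}}=\bigcup_{t>r}\overline{I^t}$. A jumping number for $I$ is a real $r\ge0$ with $\overline{I^r}\neq\overline{I^{>r}}$. *)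

From mathcomp Require Import all_boot all_algebra.
From mathcomp Require Import reals.
From mathcomp Require Import mpoly.
Set Implicit Arguments. Unset Strict Implicit. Unset Printing Implicit Defensive.
Import GRing.Theory Num.Theory.
Local Open Scope ring_scope.

Section RealPowers.
Variables (R : realType) (d : nat) (K : fieldType).

Definition ideal_gen (S : {mpoly K[d]} -> Prop) : {mpoly K[d]} -> Prop :=
  fun p => exists (n : nat) (r g : 'I_n -> {mpoly K[d]}),
    (forall k, S (g k)) /\ p = \sum_(k < n) r k * g k.

Definition is_monomial_ideal (I : {mpoly K[d]} -> Prop) : Prop :=
  exists G : 'X_{1..d} -> Prop,
    forall p, I p <-> ideal_gen (fun q => exists m, G m /\ q = 'X_[m]) p.

Definition same_ideal (I J : {mpoly K[d]} -> Prop) : Prop :=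
  forall p, I p <-> J p.

Definition vec := 'I_d -> R.
Definition dot (a : 'I_d -> nat) (x : vec) : R := \sum_(j < d) (a j)%:R * x j.
Definition mnm_vec (m : 'X_{1..d}) : vec := fun j => (m j)%:R.

Definition conv (S : vec -> Prop) : vec -> Prop :=
  fun x => exists (n : nat) (lam : 'I_n -> R) (p : 'I_n -> vec),
    (forall k, 0 <= lam k) /\ \sum_(k < n) lam k = 1 /\ (forall k, S (p k)) /\
    forall j, x j = \sum_(k < n) lam k * p k j.

Definition NP (I : {mpoly K[d]} -> Prop) : vec -> Prop :=
  conv (fun x => exists m, I 'X_[m] /\ x = mnm_vec m).

(* F contains k+1 affinely independent points *)
Definition aff_dim_ge (F : vec -> Prop) (k : nat) : Prop :=
  exists (p0 : vec) (p : 'I_k -> vec), F p0 /\ (forall l, F (p l)) /\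
    \rank (\matrix_(l < k, j < d) (p l j - p0 j)) = k.

Definition is_facet (P : vec -> Prop) (a : 'I_d -> nat) (c : nat) : Prop :=
  let F := fun x => P x /\ dot a x = c%:R in
  aff_dim_ge F d.-1 /\ ~ aff_dim_ge F d.

Definition is_vertex (P : vec -> Prop) (v : vec) : Prop :=
  P v /\ forall (y z : vec) (l : R), P y -> P z -> 0 < l < 1 ->
    (forall j, v j = l * y j + (1 - l) * z j) -> y = z.

Variables (s : nat) (a : 'I_s -> 'I_d -> nat) (c : 'I_s -> nat).

(* t . NP(I) = { x in R^d_+ | a_i . x >= t c_i for all i } *)
Definition tNP (t : R) : vec -> Prop :=
  fun x => (forall j, 0 <= x j) /\ forall i, t * (c i)%:R <= dot (a i) x.

Definition real_pow (t : R) : {mpoly K[d]} -> Prop :=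
  ideal_gen (fun q => exists m, tNP t (mnm_vec m) /\ q = 'X_[m]).

Definition real_pow_gt (r : R) : {mpoly K[d]} -> Prop :=
  fun p => exists t, r < t /\ real_pow t p.

Definition jumping_number (r : R) : Prop :=
  0 <= r /\ ~ same_ideal (real_pow r) (real_pow_gt r).

Definition S_set (i : 'I_s) : R -> Prop :=
  fun y => exists r : R, 0 <= r /\ y = r * (c i)%:R /\
    exists m : 'X_{1..d}, dot (a i) (mnm_vec m) = r * (c i)%:R /\
      forall l, l != i -> r * (c l)%:R <= dot (a l) (mnm_vec m).

Definition gen_monoid (i : 'I_s) : R -> Prop :=
  fun y => exists k : 'I_d -> nat, y = (\sum_(j < d) k j * a i j)%N%:R.

End RealPowers.

Definition is_rational (R : realType) (r : R) : Prop := exists q : rat, r = ratr q.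

Arguments NP R {d K} I _.
Arguments jumping_number {R d} K {s} a c r.
Arguments real_pow {R d} K {s} a c t _.
Arguments real_pow_gt {R d} K {s} a c r _.

(** A monomial [x^m] lies in the real power [I^t] exactly when [m] lies in
    [t NP(I)], and membership of a polynomial is tested on finitely many
    monomial generators.  Hence [r] is a jumping number exactly when some
    lattice point of [r NP(I)] lies on a facet [a_i . x = r c_i] with
    [c_i > 0]: otherwise every generator of [I^r] has slack in all these
    facets and stays in [I^t] for [t] slightly larger than [r].  All five
    assertions are read off this description: [r = a_i . m / c_i] is rational;
    scaling the lattice point by [n] gives [n r], and scaling a vertex, which
    lies on such a facet, by [n / gcd(v)] gives [n / gcd(v)]; finally the least
    value of [a_i . m / c_i] over the lattice points of [r NP(I)] exists,
    because these values lie in [(1 / prod c_i) N], and it is a jumping number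
    with the same real power as [r]. *)

From mathcomp Require Import all_boot all_algebra.
From mathcomp Require Import reals.
From mathcomp Require Import mpoly.
From mathcomp.algebra_tactics Require Import lra.
From Stdlib Require Import Classical ClassicalEpsilon FunctionalExtensionality.

Set Implicit Arguments.
Unset Strict Implicit.
Unset Printing Implicit Defensive.

Import GRing.Theory Num.Theory order.Order.TTheory.
Local Open Scope ring_scope.

Lemma ex_minn_prop (P : nat -> Prop) :
  (exists n, P n) -> exists2 n, P n & forall m, P m -> (n <= m)%N.
Proof.
move=> exP; pose b n := if excluded_middle_informative (P n) then true else false.
have bP n : reflect (P n) (b n).
  by rewrite /b; case: excluded_middle_informative; constructor.
have /ex_minnP[n /bP Pn n_min] : exists n, b n by have [n /bP] := exP; exists n.
by exists n => // m /bP; apply: n_min.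
Qed.

Section RealBounds.
Variable R : realType.

Lemma exists_fin_gap (T : finType) (P : pred T) (f : T -> R) (r : R) :
  (forall x, P x -> r < f x) -> exists2 t, r < t & forall x, P x -> t <= f x.
Proof.
move=> r_lt_f; exists (\big[Num.min/(r + 1)]_(x | P x) f x).
  by apply: lt_bigmin => //; rewrite ltrDl.
by move=> x Px; apply: bigmin_le_cond.
Qed.

Lemma ex_min_scaled_nat (L : nat) (S : R -> Prop) :
  (exists y, S y) -> (forall y, S y -> exists k : nat, y = k%:R / L%:R) ->
  exists2 y, S y & forall z, S z -> y <= z.
Proof.
move=> [y0 Sy0] S_scaled; pose P k := S (k%:R / L%:R).
have [|k Pk k_min] := @ex_minn_prop P.
  by have [k y0E] := S_scaled _ Sy0; exists k; rewrite /P -y0E.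
exists (k%:R / L%:R) => // z Sz; have [k' zE] := S_scaled _ Sz.
by rewrite zE ler_wpM2r ?invr_ge0 // ler_nat k_min // /P -zE.
Qed.

Lemma conv_nonneg_eq0 (d : nat) (S : vec R d -> Prop) (x : vec R d) :
  (forall y, S y -> forall j, 0 <= y j) -> (forall j, x j = 0) -> conv S x ->
  exists2 y, S y & forall j, y j = 0.
Proof.
move=> S_ge0 x0 [n [lam [p [lam_ge0 [lam1 [Sp xE]]]]]].
have /existsP[k lam_k] : [exists k, lam k != 0].
  rewrite -negb_forall; apply/negP => /forallP lam0; move: lam1.
  rewrite big1 => [/eqP|k _]; first by rewrite eq_sym oner_eq0.
  exact/eqP/lam0.
exists (p k) => // j; have sum0 : \sum_(i < n) lam i * p i j = 0 by rewrite -xE.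
have /eqP : lam k * p k j = 0.
  by apply: (psumr_eq0P _ sum0) => // i _; rewrite mulr_ge0 ?S_ge0.
by rewrite mulf_eq0 (negbTE lam_k) => /eqP.
Qed.

End RealBounds.

Section ScaledNewtonPolyhedron.
Variables (R : realType) (d s : nat) (a : 'I_s -> 'I_d -> nat) (c : 'I_s -> nat).
Implicit Types (b : 'I_d -> nat) (t : R) (x y : vec R d) (m : 'X_{1..d}).

Lemma mnm_vec_ge0 m j : 0 <= mnm_vec R m j.
Proof. exact: ler0n. Qed.

Lemma mnm_vecD m m' :
  mnm_vec R (m + m')%MM = (fun j => mnm_vec R m j + mnm_vec R m' j).
Proof. by apply: functional_extensionality => j; rewrite /mnm_vec mnmDE natrD. Qed.

Lemma mnm_vecMn m n : mnm_vec R (m *+ n)%MM = (fun j => n%:R * mnm_vec R m j).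
Proof.
by apply: functional_extensionality => j; rewrite /mnm_vec mulmnE natrM mulrC.
Qed.

Lemma dot_ge0 b x : (forall j, 0 <= x j) -> 0 <= dot b x.
Proof. by move=> x_ge0; apply: sumr_ge0 => j _; rewrite mulr_ge0. Qed.

Lemma dot_mnm b m : dot b (mnm_vec R m) = (\sum_(j < d) b j * m j)%N%:R.
Proof. by rewrite /dot natr_sum; apply: eq_bigr => j _; rewrite natrM. Qed.

Lemma dot_mnm_div_rat b m (k : nat) :
  is_rational (dot b (mnm_vec R m) / k%:R).
Proof.
by exists ((\sum_(j < d) b j * m j)%N%:R / k%:R); rewrite fmorph_div !rmorph_nat dot_mnm.
Qed.

Lemma dotZ b t x : dot b (fun j => t * x j) = t * dot b x.
Proof. by rewrite /dot mulr_sumr; apply: eq_bigr => j _; rewrite mulrCA. Qed.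

Lemma dotD b x y : dot b (fun j => x j + y j) = dot b x + dot b y.
Proof. by rewrite /dot -big_split; apply: eq_bigr => j _; rewrite mulrDr. Qed.

Lemma dot_delta b t j : dot b (fun k => t * (k == j)%:R) = t * (b j)%:R.
Proof.
rewrite /dot (bigD1 j) //= eqxx mulr1 big1 ?addr0 1?mulrC // => k /negbTE->.
by rewrite !mulr0.
Qed.

Lemma dot_mnm_div_common_denom m i : (0 < c i)%N ->
  exists k : nat,
    dot (a i) (mnm_vec R m) / (c i)%:R = k%:R / (\prod_(l < s | (0 < c l)%N) c l)%:R.
Proof.
set L := (\prod_(l < s | _) _)%N => ci.
have ci_L : (c i %| L)%N by rewrite /L (bigD1 i) //= dvdn_mulr.
have L_ci_gt0 : (0 < L %/ c i)%N by rewrite divn_gt0 // dvdn_leq // prodn_cond_gt0.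
exists ((\sum_(j < d) a i j * m j) * (L %/ c i))%N.
rewrite dot_mnm -{2}(divnK ci_L) !natrM invfM mulrA mulfK //.
by rewrite pnatr_eq0 -lt0n.
Qed.

Lemma tNP_anti t t' x : t <= t' -> tNP a c t' x -> tNP a c t x.
Proof.
by move=> le_tt' [x_ge0 xt']; split=> // i; apply: le_trans (xt' i); rewrite ler_wpM2r.
Qed.

Lemma tNPZ lam t x :
  0 <= lam -> tNP a c t x -> tNP a c (lam * t) (fun j => lam * x j).
Proof.
move=> lam_ge0 [x_ge0 xt]; split=> [j|i]; first by rewrite mulr_ge0.
by rewrite dotZ -mulrA ler_wpM2l.
Qed.

Lemma tNP_mnm_up t m m' :
  (m <= m')%MM -> tNP a c t (mnm_vec R m) -> tNP a c t (mnm_vec R m').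
Proof.
move=> /mnm_lepP le_mm' [_ mt]; split=> [j|i]; first exact: mnm_vec_ge0.
apply: le_trans (mt i) _; rewrite !dot_mnm ler_nat; apply: leq_sum => j _.
by rewrite leq_mul2l le_mm' orbT.
Qed.

Lemma tNP_ratioP t x : (forall j, 0 <= x j) ->
  tNP a c t x <-> forall i, (0 < c i)%N -> t <= dot (a i) x / (c i)%:R.
Proof.
move=> x_ge0; split=> [[_ xt] i ci | xt]; first by rewrite ler_pdivlMr ?ltr0n.
split=> // i; have [->|ci] := posnP (c i); first by rewrite mulr0 dot_ge0.
by rewrite -ler_pdivlMr ?ltr0n ?xt.
Qed.

(* The facets with [c_i = 0] are cones through the origin and do not move with
   [t]; jumps can only come from the others. *)
Definition on_scaled_facet t x :=
  tNP a c t x /\ exists2 i, (0 < c i)%N & dot (a i) x = t * (c i)%:R.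

Lemma on_scaled_facetZ lam t x : 0 <= lam ->
  on_scaled_facet t x -> on_scaled_facet (lam * t) (fun j => lam * x j).
Proof.
move=> lam_ge0 [xt [i ci xi]]; split; first exact: tNPZ.
by exists i; rewrite // dotZ xi mulrA.
Qed.

Lemma tNP_lift (T : finType) (x : T -> vec R d) t :
  (forall k, tNP a c t (x k)) -> (forall k, ~ on_scaled_facet t (x k)) ->
  exists2 t', t < t' & forall k, tNP a c t' (x k).
Proof.
move=> xt not_facet.
pose ratio (ki : T * 'I_s) := dot (a ki.2) (x ki.1) / (c ki.2)%:R.
have [[k i] /= ci|t' tt' t'_le] := @exists_fin_gap R _ [pred ki | 0 < c ki.2]%N ratio t.
  rewrite /ratio ltr_pdivlMr ?ltr0n // lt_def (proj2 (xt k)).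
  by rewrite andbT; apply/eqP => xi; apply: (not_facet k); split; last exists i.
exists t' => // k; apply/tNP_ratioP => [|i ci]; first exact: (proj1 (xt k)).
exact: (t'_le (k, i)).
Qed.

Lemma tNP_perturb t x j : tNP a c t x -> 0 < x j ->
  (forall i, (0 < c i)%N -> t * (c i)%:R < dot (a i) x) ->
  exists2 e, 0 < e &
    forall u, - e <= u <= e -> tNP a c t (fun k => x k + u * (k == j)%:R).
Proof.
move=> [x_ge0 xt] xj_gt0 slack.
pose f i := (dot (a i) x - t * (c i)%:R) / ((a i j)%:R + 1).
have [i /= ci|e0 e0_gt0 e0_le] := @exists_fin_gap R _ [pred i | 0 < c i]%N f 0.
  by rewrite divr_gt0 ?subr_gt0 ?slack ?ltr_wpDl.
exists (Num.min e0 (x j)) => [|u /andP[]]; first by rewrite lt_min e0_gt0.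
rewrite lerNl le_min => /andP[u_e0 u_xj] _.
have y_ge0 k : 0 <= x k + u * (k == j)%:R.
  by case: eqP => [->|_]; rewrite ?mulr1 ?mulr0 ?addr0 ?x_ge0 //; lra.
split=> // i; have [->|ci] := posnP (c i); first by rewrite mulr0 dot_ge0.
have := e0_le i ci; rewrite ler_pdivlMr ?ltr_wpDl // => e0_slack.
have : - u * (a i j)%:R <= e0 * (a i j)%:R by rewrite ler_wpM2r.
by rewrite dotD dot_delta; lra.
Qed.

End ScaledNewtonPolyhedron.

Section FacetMonoid.
Variables (R : realType) (d s : nat) (a : 'I_s -> 'I_d -> nat) (c : 'I_s -> nat).

Lemma S_set_gen_monoid i (y : R) : S_set a c i y -> gen_monoid a i y.
Proof.
move=> [r [_ [-> [m [mi _]]]]]; exists m; rewrite -mi dot_mnm.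
by congr _%:R; apply: eq_bigr => j _; rewrite mulnC.
Qed.

Lemma S_set0 i : S_set a c i (0 : R).
Proof.
exists 0; split=> //; split; first by rewrite mul0r.
have dot0 l : dot (a l) (mnm_vec R 0%MM) = 0 :> R.
  by rewrite dot_mnm big1 // => j _; rewrite mnm0E muln0.
by exists 0%MM; split=> [|l _]; rewrite dot0 mul0r.
Qed.

Lemma S_setD i (y z : R) : S_set a c i y -> S_set a c i z -> S_set a c i (y + z).
Proof.
move=> [r [r_ge0 [-> [m [mi ml]]]]] [r' [r'_ge0 [-> [m' [m'i m'l]]]]].
exists (r + r'); split; first exact: addr_ge0.
split; first by rewrite mulrDl.
exists (m + m')%MM; rewrite mnm_vecD dotD mi m'i mulrDl; split=> // l li.
by rewrite dotD mulrDl lerD ?ml ?m'l.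
Qed.

Lemma S_set_on_scaled_facet i (r : R) : (0 < c i)%N ->
  S_set a c i (r * (c i)%:R) <->
  0 <= r /\ exists m, tNP a c r (mnm_vec R m) /\ dot (a i) (mnm_vec R m) = r * (c i)%:R.
Proof.
move=> ci; have ci_neq0 : (c i)%:R != 0 :> R by rewrite pnatr_eq0 -lt0n.
split=> [[r' [r'_ge0 [/(mulIf ci_neq0) -> [m [mi ml]]]]] | [r_ge0 [m [[_ mr] mi]]]].
  split=> //; exists m; split=> //; split=> [j|l]; first exact: mnm_vec_ge0.
  by have [->|li] := eqVneq l i; [rewrite mi | apply: ml].
by exists r; split=> //; split=> //; exists m; split=> // l _; apply: mr.
Qed.

End FacetMonoid.

Section MonomialIdeals.
Variables (d : nat) (K : fieldType).

Definition monomials (P : 'X_{1..d} -> Prop) : {mpoly K[d]} -> Prop :=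
  fun q => exists m, P m /\ q = 'X_[m].

Lemma ideal_gen_gen (S : {mpoly K[d]} -> Prop) p : S p -> ideal_gen S p.
Proof.
by move=> Sp; exists 1%N, (fun=> 1), (fun=> p); rewrite big_ord1 mul1r.
Qed.

Lemma ideal_gen_sub (S T : {mpoly K[d]} -> Prop) p :
  (forall q, S q -> T q) -> ideal_gen S p -> ideal_gen T p.
Proof. by move=> ST [n [r [g [Sg ->]]]]; exists n, r, g; split=> // k; apply: ST. Qed.

Lemma ideal_gen_monomialsP (P : 'X_{1..d} -> Prop) m :
  (forall m1 m2, (m1 <= m2)%MM -> P m1 -> P m2) ->
  ideal_gen (monomials P) 'X_[m] <-> P m.
Proof.
move=> P_up; split=> [[n [r [g [Pg Xm]]]] | Pm]; last first.
  by apply: ideal_gen_gen; exists m.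
have : ('X_[m] : {mpoly K[d]})@_m != 0 by rewrite mcoeffX eqxx oner_neq0.
rewrite Xm raddf_sum /= => sum_neq0.
have /existsP[k] : [exists k, (r k * g k)@_m != 0].
  rewrite -negb_forall; apply: contra sum_neq0 => /forallP rg0.
  by rewrite big1 // => k _; apply/eqP/rg0.
have [m' [Pm' ->]] := Pg k.
rewrite -mcoeff_msupp (perm_mem (msuppMX (r k) m')) => /mapP[m'' _ ->].
by apply: P_up Pm'; apply: lem_addr.
Qed.

Lemma exists_monomial_mem (I : {mpoly K[d]} -> Prop) :
  is_monomial_ideal I -> (exists p, I p /\ p != 0) -> exists m, I 'X_[m].
Proof.
move=> [G IE] [p [/IE[[|n] [r [g [Gg pE]]]] p_neq0]].
  by move: p_neq0; rewrite pE big_ord0 eqxx.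
have [m [Gm _]] := Gg ord0; exists m; apply/IE; apply: ideal_gen_gen.
by exists m.
Qed.

End MonomialIdeals.

Section RealPowers.
Variables (R : realType) (d : nat) (K : fieldType).
Variables (s : nat) (a : 'I_s -> 'I_d -> nat) (c : 'I_s -> nat).

Lemma real_pow_XP (t : R) m : real_pow K a c t 'X_[m] <-> tNP a c t (mnm_vec R m).
Proof.
apply: (@ideal_gen_monomialsP d K (fun m => tNP a c t (mnm_vec R m))).
exact: tNP_mnm_up.
Qed.

Lemma real_pow_anti (t t' : R) p :
  t <= t' -> real_pow K a c t' p -> real_pow K a c t p.
Proof.
move=> le_tt'; apply: ideal_gen_sub => _ [m [mt' ->]].
by exists m; split=> //; apply: tNP_anti mt'.
Qed.

Lemma jumping_numberP (r : R) : jumping_number K a c r <->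
  0 <= r /\ exists m, on_scaled_facet a c r (mnm_vec R m).
Proof.
split=> [[r_ge0 not_jump] | [r_ge0 [m [mr [i ci mi]]]]]; last first.
  split=> // same; have /same[t [rt /real_pow_XP[_ mt]]] : real_pow K a c r 'X_[m].
    exact/real_pow_XP.
  by move: (mt i); rewrite mi ler_pM2r ?ltr0n // leNgt rt.
split=> //; apply: NNPP => no_facet; apply: not_jump => p.
split=> [[n [u [g [gr ->]]]] | [t [rt]]]; last by apply: real_pow_anti; rewrite ltW.
have [m mE] := fin_all_exists gr.
have [|k mF|t rt mt] := @tNP_lift R d s a c _ (fun k => mnm_vec R (m k)) r.
- by move=> k; case: (mE k).
- by apply: no_facet; exists (m k).
exists t; split=> //; exists n, u, g; split=> // k.
by exists (m k); split; [apply: mt | case: (mE k)].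
Qed.

Lemma jumping_number_rat (r : R) : jumping_number K a c r -> is_rational r.
Proof.
move=> /jumping_numberP[_ [m [_ [i ci mi]]]].
have ci_neq0 : (c i)%:R != 0 :> R by rewrite pnatr_eq0 -lt0n.
by rewrite -(mulfK ci_neq0 r) -mi; apply: dot_mnm_div_rat.
Qed.

Lemma jumping_numberMn (r : R) n :
  jumping_number K a c r -> jumping_number K a c (n%:R * r).
Proof.
move=> /jumping_numberP[r_ge0 [m mF]]; apply/jumping_numberP.
split; first exact: mulr_ge0.
by exists (m *+ n)%MM; rewrite mnm_vecMn; apply: on_scaled_facetZ.
Qed.

Lemma jumping_number_S_setP (r : R) : jumping_number K a c r <->
  exists i y, c i != 0%N /\ S_set a c i y /\ r = y / (c i)%:R.
Proof.
split=> [/jumping_numberP[r_ge0 [m [mr [i ci mi]]]] | [i [y [ci [Sy ->]]]]].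
  have ci_neq0 : (c i)%:R != 0 :> R by rewrite pnatr_eq0 -lt0n.
  exists i, (r * (c i)%:R); rewrite -lt0n mulfK //.
  by split=> //; split=> //; apply/S_set_on_scaled_facet => //; split=> //; exists m.
rewrite -lt0n in ci; have ci_neq0 : (c i)%:R != 0 :> R by rewrite pnatr_eq0 -lt0n.
move: Sy; rewrite -{1}(divfK ci_neq0 y).
move=> /S_set_on_scaled_facet[//|y_ge0 [m [mt mi]]]; apply/jumping_numberP.
by split=> //; exists m; split=> //; exists i.
Qed.

End RealPowers.

Section NewtonPolyhedron.
Variables (R : realType) (d : nat) (K : fieldType).
Variables (s : nat) (a : 'I_s -> 'I_d -> nat) (c : 'I_s -> nat).
Variable I : {mpoly K[d]} -> Prop.
Hypothesis NPE : forall x : vec R d,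
  NP R I x <-> ((forall j, 0 <= x j) /\ forall i, (c i)%:R <= dot (a i) x).
Hypothesis notI1 : ~ I 1.

Lemma NP_tNP1 x : NP R I x <-> tNP a c 1 x.
Proof.
rewrite NPE /tNP; split=> -[x_ge0 xc]; split=> // i; first by rewrite mul1r.
by rewrite -[(c i)%:R]mul1r.
Qed.

Lemma NP_X m : I 'X_[m] -> NP R I (mnm_vec R m).
Proof.
move=> Im; exists 1%N, (fun=> 1), (fun=> mnm_vec R m); split=> [_|]; first exact: ler01.
split; first by rewrite big_ord1.
by split=> [_|j]; [exists m | rewrite big_ord1 mul1r].
Qed.

Lemma mnm_vec0_notin_NP : ~ NP R I (mnm_vec R 0%MM).
Proof.
move=> /conv_nonneg_eq0[_ [m [_ ->]] j|j|y [m [Im ->]] m0]; first exact: mnm_vec_ge0.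
  by rewrite /mnm_vec mnm0E.
suff m_eq0 : m = 0%MM by apply: notI1; rewrite -mpolyX0 -m_eq0.
by apply/mnmP => j; rewrite mnm0E; apply/eqP; rewrite -(eqr_nat R); apply/eqP; exact: m0.
Qed.

Lemma exists_c_gt0 : exists i, (0 < c i)%N.
Proof.
apply: NNPP => c0; apply: mnm_vec0_notin_NP; apply/NPE; split=> [j|i].
  exact: mnm_vec_ge0.
have -> : c i = 0%N by apply: contra_not_eq c0; rewrite -lt0n => ci; exists i.
exact/dot_ge0/mnm_vec_ge0.
Qed.

Lemma vertex_on_scaled_facet m :
  is_vertex (NP R I) (mnm_vec R m) -> on_scaled_facet a c 1 (mnm_vec R m).
Proof.
move=> [/NP_tNP1 m1 vertex_m]; split=> //; apply: NNPP => not_tight.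
have [j mj] : exists j, 0 < mnm_vec R m j.
  apply: NNPP => m_le0; apply: mnm_vec0_notin_NP; apply/NP_tNP1.
  suff <- : m = 0%MM by [].
  apply/mnmP => j; rewrite mnm0E; apply: contra_not_eq m_le0 => mj.
  by exists j; rewrite ltr0n lt0n.
have [|e e_gt0 m_pert] := tNP_perturb m1 mj.
  move=> i ci; rewrite lt_def (proj2 m1) andbT; apply/eqP => mi.
  by apply: not_tight; exists i.
pose shift u k := mnm_vec R m k + u * (k == j)%:R.
have : shift e = shift (- e).
  apply: (vertex_m _ _ 2^-1) => [|||k]; rewrite ?NP_tNP1.
  - by apply: m_pert; rewrite lexx andbT; lra.
  - by apply: m_pert; rewrite lexx; lra.
  - by apply/andP; split; lra.
  - by rewrite /shift; lra.
by move=> /(congr1 (fun v => v j)); rewrite /shift eqxx !mulr1; lra.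
Qed.

Lemma jumping_number_vertex m n : is_vertex (NP R I) (mnm_vec R m) ->
  jumping_number K a c (n%:R / (\big[gcdn/0%N]_(j < d) m j)%:R : R).
Proof.
move=> /vertex_on_scaled_facet m_facet; set g := \big[gcdn/0%N]_(j < d) m j.
pose x := [multinom (n * (m j %/ g))%N | j < d].
have xE : mnm_vec R x = (fun j => n%:R / g%:R * mnm_vec R m j).
  apply: functional_extensionality => j; rewrite /mnm_vec mnmE natrM.
  have [->|g_gt0] := posnP g; first by rewrite divn0 invr0 !mulr0 mul0r.
  rewrite natr_div ?mulrA 1?[RHS]mulrAC // ?unitfE ?pnatr_eq0 -?lt0n //.
  by rewrite /g (bigD1 j) //= dvdn_gcdl.
have ng_ge0 : 0 <= n%:R / g%:R :> R by rewrite divr_ge0.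
apply/jumping_numberP; split=> //; exists x.
by have := on_scaled_facetZ ng_ge0 m_facet; rewrite mulr1 -xE.
Qed.

Hypothesis monoI : is_monomial_ideal I.
Hypothesis nzI : exists p, I p /\ p != 0.

Lemma exists_lattice_tNP (r : R) : 0 <= r -> exists m, tNP a c r (mnm_vec R m).
Proof.
move=> r_ge0; have [m0 /NP_X/NP_tNP1 m0_1] := exists_monomial_mem monoI nzI.
exists (m0 *+ Num.bound r)%MM; rewrite mnm_vecMn.
apply: tNP_anti (tNPZ (ler0n _ _) m0_1).
by rewrite mulr1 ltW // archi_boundP.
Qed.

Lemma real_pow_eq_jumping (r : R) : 0 <= r ->
  exists q : rat, jumping_number K a c (ratr q : R) /\
    same_ideal (real_pow K a c r) (real_pow K a c (ratr q : R)).
Proof.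
move=> r_ge0; pose ratios y := exists m i, (0 < c i)%N /\ tNP a c r (mnm_vec R m) /\
  y = dot (a i) (mnm_vec R m) / (c i)%:R.
have [_ [m [i [ci [mr ->]]]] q_min] :
    exists2 q, ratios q & forall y, ratios y -> q <= y.
  apply: ex_min_scaled_nat.
    have [m mr] := exists_lattice_tNP r_ge0; have [i ci] := exists_c_gt0.
    by exists (dot (a i) (mnm_vec R m) / (c i)%:R), m, i.
  by move=> _ [m [i [ci [_ ->]]]]; apply: dot_mnm_div_common_denom.
set q := dot (a i) (mnm_vec R m) / (c i)%:R.
have r_le_q : r <= q by have := (tNP_ratioP a c r (mnm_vec_ge0 R m)).1 mr i ci.
have tNP_r_q x : tNP a c r (mnm_vec R x) -> tNP a c q (mnm_vec R x).
  move=> xr; apply/tNP_ratioP => [|l cl]; first exact: mnm_vec_ge0.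
  by apply: q_min; exists x, l.
have [q' qE] := dot_mnm_div_rat R (a i) m (c i); exists q'; rewrite -qE; split.
  apply/jumping_numberP; split; first exact: le_trans r_le_q.
  exists m; split; first exact: tNP_r_q.
  by exists i; rewrite // mulfVK // pnatr_eq0 -lt0n.
move=> p; split; last exact: real_pow_anti.
by apply: ideal_gen_sub => _ [x [xr ->]]; exists x; split=> //; apply: tNP_r_q.
Qed.

End NewtonPolyhedron.

Theorem theorem5p9 (R : realType) (d : nat) (K : fieldType)
  (I : {mpoly K[d]} -> Prop)
  (s : nat) (a : 'I_s -> 'I_d -> nat) (c : 'I_s -> nat) :
  is_monomial_ideal I ->
  (exists p, I p /\ p != 0) ->
  ~ I 1 ->
  (forall x : vec R d, NP R I x <->
     ((forall j, 0 <= x j) /\ forall i, (c i)%:R <= dot (a i) x)) ->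
  (forall i, is_facet (NP R I) (a i) (c i)) ->
  (* (1) *)
  (forall r : R, jumping_number K a c r -> is_rational r) /\
  (* (2) *)
  (forall r : R, 0 <= r ->
     (exists q : rat, same_ideal (real_pow K a c r) (real_pow K a c (ratr q : R))) /\
     (exists q : rat, jumping_number K a c (ratr q : R) /\
                      same_ideal (real_pow K a c r) (real_pow K a c (ratr q : R)))) /\
  (* (3) *)
  (forall (r : R) (n : nat), jumping_number K a c r ->
     jumping_number K a c (n%:R * r)) /\
  (* (4) *)
  (forall m : 'X_{1..d}, is_vertex (NP R I) (mnm_vec R m) ->
     forall n : nat,
       jumping_number K a c ((n%:R : R) / (\big[gcdn/0%N]_(j < d) m j)%:R)) /\
  (* (5) *)
  (forall i, c i != 0%N ->
     (forall y : R, S_set a c i y -> gen_monoid a i y) /\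
     S_set a c i (0 : R) /\
     (forall y z : R, S_set a c i y -> S_set a c i z -> S_set a c i (y + z))) /\
  (forall r : R, jumping_number K a c r <->
     exists i (y : R), c i != 0%N /\ S_set a c i y /\ r = y / (c i)%:R).
Proof.
(* Only the inequality description of NP(I) is used; the facet condition,
   i.e. irredundancy of that description, is not needed. *)
move=> monoI nzI notI1 NPE _.
split; first exact: jumping_number_rat.
split.
  move=> r r_ge0.
  have [q [q_jump q_same]] := real_pow_eq_jumping NPE notI1 monoI nzI r_ge0.
  by split; exists q.
split; first by move=> r n; apply: jumping_numberMn.
split; first by move=> m m_vertex n; apply: jumping_number_vertex.
split; last exact: jumping_number_S_setP.
by move=> i _; split; [apply: S_set_gen_monoid | split; [apply: S_set0 | apply: S_setD]].
Qed.
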